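(* Let $a>0$ and $0<h\le\frac{1}{3a}$, and let $\alpha_1$ be the smallest positive solution $q$ of $\tan(hq)=\frac{2aq}{q^2-a^2}$. Define, for $z,w\in[0,h]$ and $t>s$, $$P_1(z,t,w,s)=\frac{2e^{-\alpha_1^2(t-s)}[\alpha_1\cos(\alpha_1 z)+a\sin(\alpha_1 z)][\alpha_1\cos(\alpha_1 w)+a\sin(\alpha_1 w)]}{2a+h(a^2+\alpha_1^2)}.$$ Then for all $0\le z,w\le h$ and $t>s$, $$\left|P_1(z,t,w,s)-\frac{\alpha_1^2}{2a}e^{-\alpha_1^2(t-s)}\right|\le\frac52\,h\alpha_1^2e^{-\alpha_1^2(t-s)}.$$ *)

From Stdlib Require Export Reals.
Open Scope R_scope.

(* q is a (genuine) solution of tan(h q) = 2 a q / (q^2 - a^2):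
   both sides are defined (cos(hq) <> 0, q^2 <> a^2) and they are equal. *)
Definition is_eigen_sol (a h q : R) : Prop :=
  cos (h * q) <> 0 /\ q ^ 2 - a ^ 2 <> 0 /\
  tan (h * q) = 2 * a * q / (q ^ 2 - a ^ 2).

Definition smallest_pos_sol (a h alpha1 : R) : Prop :=
  0 < alpha1 /\ is_eigen_sol a h alpha1 /\
  (forall q, 0 < q -> is_eigen_sol a h q -> alpha1 <= q).

Definition P1 (a h alpha1 z t w s : R) : R :=
  2 * exp (- alpha1 ^ 2 * (t - s))
    * (alpha1 * cos (alpha1 * z) + a * sin (alpha1 * z))
    * (alpha1 * cos (alpha1 * w) + a * sin (alpha1 * w))
  / (2 * a + h * (a ^ 2 + alpha1 ^ 2)).

From Stdlib Require Import Reals Lra Psatz.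
Open Scope R_scope.

(* In the variables b = h a and x = h alpha1 the eigenvalue equation reads
   sin x (x^2 - b^2) = 2 b x cos x.  A first sign/IVT argument puts alpha1 in
   (a, PI/(2h)), i.e. b < x < PI/2; there x cos x <= sin x <= x, which pins x^2
   between b(2+b)/(1+b) and 2b + b^2.  With the numerator factors
   x cos u + b sin u trapped in [x (1 - x^2/2), x (1 + b)], the bound reduces to
   two polynomial inequalities in b, valid for b <= 1/3. *)

Lemma sin_le_id x : 0 <= x -> sin x <= x.
Proof.
intros [Hx | <-]; [now left; apply sin_lt_x | rewrite sin_0; lra].
Qed.

Lemma sin_ge_taylor3 x : 0 <= x -> x <= PI -> x - x ^ 3 / 6 <= sin x.
Proof.
intros H0 HPI; pose proof (sin_bound x 0 H0 HPI) as H.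
unfold sin_approx, sin_term in H; simpl in H; lra.
Qed.

Lemma cos_taylor_bounds x : - PI / 2 <= x -> x <= PI / 2 ->
  1 - x ^ 2 / 2 <= cos x <= 1 - x ^ 2 / 2 + x ^ 4 / 24.
Proof.
intros H0 HPI; pose proof (cos_bound x 0 H0 HPI) as H.
unfold cos_approx, cos_term in H; simpl in H; lra.
Qed.

Lemma mul_cos_le_sin x : 0 <= x -> x <= PI / 2 -> x * cos x <= sin x.
Proof.
intros H0 HPI; pose proof PI2_1; pose proof PI_4.
pose proof (sin_ge_taylor3 x H0 ltac:(lra)).
destruct (cos_taylor_bounds x ltac:(lra) HPI) as [_ Hcos].
assert (x * cos x <= x * (1 - x ^ 2 / 2 + x ^ 4 / 24))
  by (apply Rmult_le_compat_l; lra).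
assert (0 <= x ^ 3 * (8 - x ^ 2)) by (apply Rmult_le_pos; nra).
nra.
Qed.

Lemma eigen_sol_cleared a h q : is_eigen_sol a h q ->
  sin (h * q) * (q ^ 2 - a ^ 2) = 2 * a * q * cos (h * q).
Proof.
intros [Hcos [Hq Htan]]; unfold tan in Htan.
apply (Rmult_eq_reg_r (/ cos (h * q))); [| now apply Rinv_neq_0_compat].
replace (sin (h * q) * (q ^ 2 - a ^ 2) * / cos (h * q))
  with (sin (h * q) / cos (h * q) * (q ^ 2 - a ^ 2)) by (field; lra).
rewrite Htan; field; lra.
Qed.

Lemma eigen_sol_of_cleared a h q : 0 < cos (h * q) -> q ^ 2 - a ^ 2 <> 0 ->
  sin (h * q) * (q ^ 2 - a ^ 2) = 2 * a * q * cos (h * q) -> is_eigen_sol a h q.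
Proof.
intros Hcos Hq Heq; split; [lra | split; [exact Hq |]].
unfold tan; field_simplify_eq; [lra | split; lra].
Qed.

Lemma eigen_sol_gt a h q : 0 < a -> 0 < h -> h * a < PI / 2 -> 0 < q ->
  is_eigen_sol a h q -> a < q.
Proof.
intros Ha Hh Hha Hq Hsol.
destruct (Rtotal_order a q) as [Hlt | [Heq | Hgt]]; [exact Hlt | |].
- destruct Hsol as [_ [Hne _]]; subst; exfalso; apply Hne; ring.
- exfalso; pose proof (eigen_sol_cleared a h q Hsol) as Heq.
  assert (0 < h * q < PI / 2) by nra.
  assert (0 < sin (h * q)) by (apply sin_gt_0; lra).
  assert (0 < cos (h * q)) by (apply cos_gt_0; lra).
  assert (q ^ 2 - a ^ 2 < 0) by nra.
  assert (0 < 2 * a * q * cos (h * q)) by (repeat apply Rmult_lt_0_compat; lra).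
  nra.
Qed.

Lemma eigen_sol_exists a h : 0 < a -> 0 < h -> h * a < PI / 2 ->
  exists q, a < q /\ h * q < PI / 2 /\ is_eigen_sol a h q.
Proof.
intros Ha Hh Hha.
set (f q := sin (h * q) * (q ^ 2 - a ^ 2) - 2 * a * q * cos (h * q)).
set (qmax := PI / (2 * h)).
assert (Hqmax : h * qmax = PI / 2) by (unfold qmax; field; lra).
assert (Haq : a < qmax) by (apply (Rmult_lt_reg_l h); lra).
assert (Hfa : f a < 0).
{ assert (0 < cos (h * a)) by (apply cos_gt_0; nra).
  unfold f; replace (a ^ 2 - a ^ 2) with 0 by ring.
  assert (0 < 2 * a * a * cos (h * a)) by (repeat apply Rmult_lt_0_compat; lra).
  lra. }
assert (Hfq : 0 < f qmax).
{ unfold f; rewrite Hqmax, sin_PI2, cos_PI2; nra. }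
destruct (IVT f a qmax ltac:(unfold f; reg) Haq Hfa Hfq) as [q [[Hq1 Hq2] Hf]].
assert (a < q) by (destruct Hq1 as [| <-]; lra).
assert (h * q < PI / 2).
{ destruct Hq2 as [Hlt | ->]; [rewrite <- Hqmax; nra | lra]. }
exists q; split; [lra | split; [lra |]].
apply eigen_sol_of_cleared; [apply cos_gt_0; nra | nra | unfold f in Hf; lra].
Qed.

Lemma smallest_pos_sol_bounds a h alpha1 : 0 < a -> 0 < h -> h * a < PI / 2 ->
  smallest_pos_sol a h alpha1 -> a < alpha1 /\ h * alpha1 < PI / 2.
Proof.
intros Ha Hh Hha [Hpos [Hsol Hmin]]; split; [now apply (eigen_sol_gt a h) |].
destruct (eigen_sol_exists a h Ha Hh Hha) as [q [Haq [Hq Hsolq]]].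
pose proof (Hmin q ltac:(lra) Hsolq); nra.
Qed.

(* h times the first eigenfunction at z, with b = h a, x = h alpha1, u = alpha1 z. *)
Definition scaled_mode (b x u : R) : R := x * cos u + b * sin u.

Lemma P1_sub_scaled a h alpha1 z t w s : 0 < a -> 0 < h ->
  let b := h * a in let x := h * alpha1 in let E := exp (- alpha1 ^ 2 * (t - s)) in
  P1 a h alpha1 z t w s - alpha1 ^ 2 / (2 * a) * E =
  E / h * (2 * (scaled_mode b x (alpha1 * z) * scaled_mode b x (alpha1 * w))
             / (2 * b + b ^ 2 + x ^ 2) - x ^ 2 / (2 * b)).
Proof.
intros Ha Hh b x E; unfold P1, scaled_mode, b, x, E.
field; split; [| split]; try lra; nra.
Qed.

Lemma scaled_mode_bounds b x u : 0 <= b -> 0 <= u <= x -> x <= PI / 2 ->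
  x * (1 - x ^ 2 / 2) <= scaled_mode b x u <= x * (1 + b).
Proof.
intros Hb [Hu Hux] Hx; pose proof PI2_1; unfold scaled_mode.
destruct (cos_taylor_bounds x ltac:(lra) Hx) as [Hcosx _].
assert (cos x <= cos u) by (apply cos_decr_1; lra).
assert (0 <= sin u) by (apply sin_ge_0; lra).
pose proof (sin_le_id u Hu); pose proof (COS_bound u).
split; nra.
Qed.

Lemma scaled_estimate b x p : 0 < b <= 1 / 3 -> 0 < x ->
  x ^ 2 <= 2 * b + b ^ 2 -> b * (2 + b) <= x ^ 2 * (1 + b) ->
  (x * (1 - x ^ 2 / 2)) ^ 2 <= p <= (x * (1 + b)) ^ 2 ->
  Rabs (2 * p / (2 * b + b ^ 2 + x ^ 2) - x ^ 2 / (2 * b)) <= 5 / 2 * x ^ 2.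
Proof.
intros [Hb Hb3] Hx Hle Hge [Hp1 Hp2].
set (D := 2 * b + b ^ 2 + x ^ 2).
assert (HD : 0 < D) by (unfold D; nra).
assert (Hupper : 4 * b * (1 + b) ^ 2 <= (1 + 5 * b) * D).
{ assert (b * (2 + b) ^ 2 <= D * (1 + b)) by (unfold D; nra).
  assert (4 * (1 + b) ^ 3 <= (1 + 5 * b) * (2 + b) ^ 2) by nra.
  apply (Rmult_le_reg_r (1 + b)); [lra | nra]. }
assert (Hlower : (1 - 5 * b) * D <= 4 * b * (1 - x ^ 2 / 2) ^ 2).
{ assert (1 - b - b ^ 2 / 2 <= 1 - x ^ 2 / 2) by lra.
  assert (0 <= 1 - b - b ^ 2 / 2) by nra.
  assert ((1 - 5 * b) * (2 + b) <= 2 * (1 - b - b ^ 2 / 2) ^ 2) by nra.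
  destruct (Rle_lt_dec (1 - 5 * b) 0); [nra |].
  assert (D <= 2 * b * (2 + b)) by (unfold D; nra).
  nra. }
replace (2 * p / D - x ^ 2 / (2 * b))
  with ((4 * b * p - x ^ 2 * D) / (2 * b * D)) by (field; lra).
unfold Rdiv; rewrite Rabs_mult, Rabs_inv, (Rabs_pos_eq (2 * b * D)) by nra.
apply (Rmult_le_reg_r (2 * b * D)); [nra |].
rewrite Rmult_assoc, Rinv_l, Rmult_1_r by nra.
apply Rabs_le; split; nra.
Qed.

Section ScaledEigenvalue.

Variables b x : R.
Hypothesis b_pos : 0 < b.
Hypothesis b_le : b <= 1 / 3.
Hypothesis b_lt_x : b < x.
Hypothesis x_lt_PI2 : x < PI / 2.
Hypothesis eigen_eq : sin x * (x ^ 2 - b ^ 2) = 2 * b * x * cos x.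

Lemma scaled_eigen_sq_le : x ^ 2 <= 2 * b + b ^ 2.
Proof.
assert (Hcos : 0 < cos x) by (apply cos_gt_0; lra).
assert (x * cos x * (x ^ 2 - b ^ 2) <= x * cos x * (2 * b)).
{ replace (x * cos x * (2 * b)) with (2 * b * x * cos x) by ring.
  rewrite <- eigen_eq; apply Rmult_le_compat_r; [nra |].
  apply mul_cos_le_sin; lra. }
assert (0 < x * cos x) by nra.
nra.
Qed.

Lemma scaled_eigen_sq_ge : b * (2 + b) <= x ^ 2 * (1 + b).
Proof.
pose proof PI2_1.
destruct (cos_taylor_bounds x ltac:(lra) ltac:(lra)) as [Hcos _].
assert (2 * b * x * (1 - x ^ 2 / 2) <= x * (x ^ 2 - b ^ 2)).
{ apply Rle_trans with (2 * b * x * cos x).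
  - apply Rmult_le_compat_l; nra.
  - rewrite <- eigen_eq; apply Rmult_le_compat_r; [nra | apply sin_le_id; lra]. }
nra.
Qed.

Lemma scaled_mode_product_estimate u v : 0 <= u <= x -> 0 <= v <= x ->
  Rabs (2 * (scaled_mode b x u * scaled_mode b x v) / (2 * b + b ^ 2 + x ^ 2)
        - x ^ 2 / (2 * b)) <= 5 / 2 * x ^ 2.
Proof.
intros Hu Hv.
pose proof scaled_eigen_sq_le as Hsq_le.
assert (x ^ 2 <= 2) by (assert (b * b <= 1) by nra; nra).
assert (0 <= x * (1 - x ^ 2 / 2)) by (apply Rmult_le_pos; lra).
destruct (scaled_mode_bounds b x u ltac:(lra) Hu ltac:(lra)).
destruct (scaled_mode_bounds b x v ltac:(lra) Hv ltac:(lra)).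
apply scaled_estimate; [lra | lra | exact Hsq_le | exact scaled_eigen_sq_ge |].
split; rewrite <- Rsqr_pow2; apply Rmult_le_compat; lra.
Qed.

End ScaledEigenvalue.

Theorem lemma3p4 (a h alpha1 : R) :
  0 < a -> 0 < h -> h <= 1 / (3 * a) ->
  smallest_pos_sol a h alpha1 ->
  forall z w t s : R,
    0 <= z <= h -> 0 <= w <= h -> s < t ->
    Rabs (P1 a h alpha1 z t w s
          - alpha1 ^ 2 / (2 * a) * exp (- alpha1 ^ 2 * (t - s)))
    <= 5 / 2 * h * alpha1 ^ 2 * exp (- alpha1 ^ 2 * (t - s)).
Proof.
intros Ha Hh Hh3 Hsmall z w t s Hz Hw _.
assert (Hb3 : h * a <= 1 / 3).
{ apply Rle_trans with (1 / (3 * a) * a); [apply Rmult_le_compat_r; lra |].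
  right; field; lra. }
pose proof PI2_1.
destruct (smallest_pos_sol_bounds a h alpha1 Ha Hh ltac:(lra) Hsmall) as [Hgt Hlt].
destruct Hsmall as [Hpos [Hsol _]].
pose proof (eigen_sol_cleared a h alpha1 Hsol) as Heq.
rewrite P1_sub_scaled by assumption.
set (b := h * a) in *; set (x := h * alpha1) in *.
set (E := exp (- alpha1 ^ 2 * (t - s))).
assert (Hscaled : sin x * (x ^ 2 - b ^ 2) = 2 * b * x * cos x).
{ transitivity (h ^ 2 * (sin x * (alpha1 ^ 2 - a ^ 2)));
    [unfold x, b; ring | rewrite Heq; unfold x, b; ring]. }
assert (HE : 0 < E / h) by (apply Rdiv_lt_0_compat; [apply exp_pos | lra]).
rewrite Rabs_mult, (Rabs_pos_eq (E / h)) by lra.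
replace (5 / 2 * h * alpha1 ^ 2 * E) with (E / h * (5 / 2 * x ^ 2))
  by (unfold x; field; lra).
apply Rmult_le_compat_l; [lra |].
apply scaled_mode_product_estimate; try assumption; unfold b, x; try split; nra.
Qed.
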